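(* Let $\mathcal{N}$ be a nonzero Gaussian integer and let $y,z$ be real numbers with $y\ge z\ge 2$. Then $$T_1\le \sum_{\mathfrak q:\ z\le N(\mathfrak q)<y} S(\mathcal{A}_{\mathfrak q},\mathcal{P},z)+O\!\left(\frac{N(\mathcal{N})}{z}\right),$$ where $\mathfrak q$ runs over prime ideals, $\mathcal{A}_{\mathfrak q}=\{n\in\mathcal{A}:\ \mathfrak q\mid (n)\}$, and the implied constant is absolute.
   Context: $\mathbb{Z}[i]$ is the ring of Gaussian integers, $N$ the norm. $\mathcal{P}$ is the set of Gaussian primes (prime elements) not dividing $\mathcal{N}$; $\mathcal{A}=\{\mathcal{N}-p:\ p\in\mathcal{P},\ N(p)<N(\mathcal{N})\}$. For $w\ge2$, $P(w)$ is the product of the distinct prime ideals $(p)$, $p\in\mathcal{P}$, $N(p)<w$. For finite $\mathcal{B}\subset\mathbb{Z}[i]$, $S(\mathcal{B},\mathcal{P},w)=\#\{n\in\mathcal{B}:\ (n)+P(w)=\mathbb{Z}[i]\}$. $T_1=\sum_{n\in\mathcal{A},\ (n)+P(z)=\mathbb{Z}[i]}\ \sum_{\mathfrak q:\ z\le N(\mathfrak q)<y,\ \mathfrak q^k\|(n)}k$, summing over prime ideals $\mathfrak q$ dividing $(n)$ with $k$ the exact exponent. *)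

From HB Require Import structures.
From mathcomp Require Import all_boot all_order all_algebra.
From mathcomp Require Import boolp classical_sets fsbigop reals.
Set Implicit Arguments. Unset Strict Implicit. Unset Printing Implicit Defensive.
Import Order.TTheory GRing.Theory Num.Theory.
Local Open Scope ring_scope.
Local Open Scope classical_set_scope.

(** Gaussian integers a + b i, represented as pairs (a, b) of integers. *)
Definition gint := (int * int)%type.
Definition zi_zero : gint := (0, 0).
Definition zi_one : gint := (1, 0).
Definition zi_mul (x y : gint) : gint :=
  (x.1 * y.1 - x.2 * y.2, x.1 * y.2 + x.2 * y.1).
Definition zi_sub (x y : gint) : gint := (x.1 - y.1, x.2 - y.2).
Definition zi_exp (x : gint) (k : nat) : gint := iter k (zi_mul x) zi_one.
Definition zi_norm (x : gint) : nat := absz (x.1 ^+ 2 + x.2 ^+ 2).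

Definition zi_dvd (d n : gint) : Prop := exists k : gint, n = zi_mul d k.
Definition zi_unit (u : gint) : Prop := exists v : gint, zi_mul u v = zi_one.
Definition zi_prime (p : gint) : Prop :=
  [/\ p <> zi_zero, ~ zi_unit p &
      forall a b : gint, zi_dvd p (zi_mul a b) -> zi_dvd p a \/ zi_dvd p b].

(** Nonzero prime ideals of Z[i] = (q) with q a Gaussian prime; each has a
    unique generator in the region Re q > 0, Im q >= 0.  We index prime
    ideals by these normalized generators; N((q)) = N(q), (q) | (n) iff
    q | n, and (q)^k || (n) iff q^k | n and not q^(k+1) | n. *)
Definition prime_ideal_rep (q : gint) : Prop :=
  [/\ zi_prime q, 0 < q.1 & 0 <= q.2].

Definition calP (NN : gint) (p : gint) : Prop := zi_prime p /\ ~ zi_dvd p NN.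

Definition calA (NN : gint) : set gint :=
  [set n | exists p, [/\ calP NN p, (zi_norm p < zi_norm NN)%N & n = zi_sub NN p]].

(** (n) + P(w) = Z[i] : no prime ideal (p), p in P, N(p) < w divides (n). *)
Definition coprimeP {R : realType} (NN : gint) (w : R) (n : gint) : Prop :=
  forall p, calP NN p -> (zi_norm p)%:R < w -> ~ zi_dvd p n.

Definition Sift {R : realType} (NN : gint) (B : set gint) (w : R) : nat :=
  \sum_(n \in [set n | B n /\ coprimeP NN w n]) 1%N.

Definition calA_q (NN q : gint) : set gint := [set n | calA NN n /\ zi_dvd q n].

Definition primes_between {R : realType} (z y : R) : set gint :=
  [set q | prime_ideal_rep q /\ (z <= (zi_norm q)%:R < y)].

Definition exact_exp (q n : gint) (k : nat) : Prop :=
  zi_dvd (zi_exp q k) n /\ ~ zi_dvd (zi_exp q k.+1) n.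

Definition T1 {R : realType} (NN : gint) (y z : R) : nat :=
  \sum_(n \in [set n | calA NN n /\ coprimeP NN z n])
    \sum_(q \in primes_between z y)
      \sum_(k \in [set k : nat | exact_exp q n k]) k.

From Pilot Require Import Defs.
From HB Require Import structures.
From mathcomp Require Import all_boot all_order all_algebra.
From mathcomp Require Import boolp classical_sets fsbigop reals cardinality.
From mathcomp Require Import ring lra zify.
Set Implicit Arguments. Unset Strict Implicit. Unset Printing Implicit Defensive.
Import Order.TTheory GRing.Theory Num.Theory.
Local Open Scope ring_scope.
Local Open Scope classical_set_scope.

(** Write the exponent of a prime ideal q in (n) as the number of j >= 1 with
    q^j | n.  Summed over n in A and q, the terms j = 1 are exactly
    sum_q S(A_q, P, z).  The elements of A are nonzero of norm at most 4 N(NN),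
    and a lattice-point count in a box shows that at most 9 X / N(d) nonzero
    multiples of d have norm at most X; hence the terms j >= 2 contribute at
    most 36 N(NN) sum_q sum_(j >= 2) N(q)^-j <= 72 N(NN) sum_(N(q) >= z) N(q)^-2.
    Finally the sum of N(q)^-2 over the lattice points q of the first quadrant
    with N(q) >= z is at most 8 / z: grouping them by m = max(Re q, Im q), the
    2m + 1 points of a shell weigh at most m^-4 each, and
    (2m + 1) m^-4 <= 4 (m^-2 - (m + 1)^-2) telescopes. *)

Lemma zi_mulA x y w : zi_mul x (zi_mul y w) = zi_mul (zi_mul x y) w.
Proof. by case: x y w => [a b] [c d] [e f]; rewrite /zi_mul /=; congr pair; ring. Qed.

Lemma zi_mulC x y : zi_mul x y = zi_mul y x.
Proof. by case: x y => [a b] [c d]; rewrite /zi_mul /=; congr pair; ring. Qed.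

Lemma zi_mul1r x : zi_mul zi_one x = x.
Proof. by case: x => [a b]; rewrite /zi_mul /=; congr pair; ring. Qed.

Lemma zi_mulr1 x : zi_mul x zi_one = x.
Proof. by rewrite zi_mulC zi_mul1r. Qed.

Lemma zi_mulr0 x : zi_mul x zi_zero = zi_zero.
Proof. by case: x => [a b]; rewrite /zi_mul /=; congr pair; ring. Qed.

Lemma zi_mulrBr x y w : zi_mul x (zi_sub y w) = zi_sub (zi_mul x y) (zi_mul x w).
Proof.
by case: x y w => [a b] [c d] [e f]; rewrite /zi_mul /zi_sub /=; congr pair; ring.
Qed.

Lemma zi_subr0_eq x y : zi_sub x y = zi_zero -> x = y.
Proof. by case: x y => [a b] [c d] [/eqP + /eqP]; rewrite !subr_eq0 => /eqP-> /eqP->. Qed.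

Lemma zi_normM x y : zi_norm (zi_mul x y) = (zi_norm x * zi_norm y)%N.
Proof.
by case: x y => [a b] [c d]; rewrite /zi_norm /zi_mul /= -abszM; congr absz; ring.
Qed.

Lemma zi_norm_eq0 x : zi_norm x = 0%N -> x = zi_zero.
Proof.
case: x => [a b]; rewrite /zi_norm /= => /eqP; rewrite absz_eq0 => /eqP ab0.
by congr pair; nia.
Qed.

Lemma zi_mulfI c : c <> zi_zero -> injective (zi_mul c).
Proof.
move=> c0 w w' eq_cw; apply: zi_subr0_eq.
have /(congr1 zi_norm) : zi_mul c (zi_sub w w') = zi_zero.
  by rewrite zi_mulrBr eq_cw; case: (zi_mul c w') => a b; congr pair; ring.
rewrite zi_normM => /eqP; rewrite muln_eq0 => /orP[/eqP/zi_norm_eq0 //|/eqP].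
exact: zi_norm_eq0.
Qed.

Lemma zi_expD q a b : zi_exp q (a + b) = zi_mul (zi_exp q a) (zi_exp q b).
Proof.
elim: a => [|a IH]; first by rewrite add0n zi_mul1r.
by rewrite addSn /= IH zi_mulA.
Qed.

Lemma zi_exp1 q : zi_exp q 1 = q.
Proof. exact: zi_mulr1. Qed.

Lemma zi_normX q k : zi_norm (zi_exp q k) = (zi_norm q ^ k)%N.
Proof. by elim: k => [|k IH] //=; rewrite zi_normM IH expnS. Qed.

Lemma zi_dvd_trans a b c : zi_dvd a b -> zi_dvd b c -> zi_dvd a c.
Proof. by move=> [k ->] [l ->]; exists (zi_mul k l); rewrite zi_mulA. Qed.

Lemma zi_dvd_exp2l q j k : (j <= k)%N -> zi_dvd (zi_exp q j) (zi_exp q k).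
Proof. by move=> le_jk; exists (zi_exp q (k - j)); rewrite -zi_expD subnKC. Qed.

Lemma zi_dvd_leq_norm d n : n <> zi_zero -> zi_dvd d n -> (zi_norm d <= zi_norm n)%N.
Proof.
move=> n0 [k def_n]; rewrite def_n zi_normM leq_pmulr // lt0n.
by apply/eqP => /zi_norm_eq0 k0; apply: n0; rewrite def_n k0 zi_mulr0.
Qed.

Lemma zi_normB_le x y : (zi_norm (zi_sub x y) <= 2 * zi_norm x + 2 * zi_norm y)%N.
Proof.
case: x y => [a b] [c d]; rewrite /zi_norm /= -lez_nat PoszD !PoszM.
rewrite !gez0_abs ?addr_ge0 ?sqr_ge0 // -subr_ge0.
have -> : 2%Z * (a ^+ 2 + b ^+ 2) + 2%Z * (c ^+ 2 + d ^+ 2)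
            - ((a - c) ^+ 2 + (b - d) ^+ 2) = (a + c) ^+ 2 + (b + d) ^+ 2 by ring.
by rewrite addr_ge0 ?sqr_ge0.
Qed.

Lemma exact_exp_uniq q n k1 k2 : exact_exp q n k1 -> exact_exp q n k2 -> k1 = k2.
Proof.
move=> [d1 n1] [d2 n2]; case: (ltngtP k1 k2) => // lt_k.
  by case: n1; apply: zi_dvd_trans d2; apply: zi_dvd_exp2l.
by case: n2; apply: zi_dvd_trans d1; apply: zi_dvd_exp2l.
Qed.

Section FiniteSums.
Variable R : numDomainType.

Lemma ler_fsum (T : choiceType) (P : set T) (F G : T -> R) :
  finite_set P -> (forall i, P i -> F i <= G i) ->
  \sum_(i \in P) F i <= \sum_(i \in P) G i.
Proof.
move=> finP leFG; rewrite !fsbig_finite // big_seq [leRHS]big_seq.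
by apply: ler_sum => i; rewrite in_fset_set // inE; apply: leFG.
Qed.

Lemma ler_fsum_subset (T : choiceType) (P Q : set T) (F : T -> R) :
  finite_set Q -> P `<=` Q -> (forall i, Q i -> 0 <= F i) ->
  \sum_(i \in P) F i <= \sum_(i \in Q) F i.
Proof.
move=> finQ PQ F_ge0; rewrite -(setIidr PQ) fsbig_mkcondr.
by apply: ler_fsum => // i Qi; case: ifP => // _; apply: F_ge0.
Qed.

End FiniteSums.

Lemma natr_fsum (R : pzSemiRingType) (T : choiceType) (P : set T) (F : T -> nat) :
  finite_set P -> ((\sum_(i \in P) (F i : nat))%:R : R) = \sum_(i \in P) ((F i)%:R : R).
Proof. by move=> finP; rewrite !fsbig_finite // natr_sum. Qed.

Lemma exchange_fsbig_nat (R : Type) (idx : R) (op : Monoid.com_law idx)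
    (T : choiceType) (P : set T) (K : nat) (F : T -> nat -> R) : finite_set P ->
  \big[op/idx]_(i \in P) \big[op/idx]_(0 <= j < K) F i j
  = \big[op/idx]_(0 <= j < K) \big[op/idx]_(i \in P) F i j.
Proof.
move=> finP; rewrite fsbig_finite //.
by under [RHS]eq_bigr do rewrite fsbig_finite //; apply: exchange_big.
Qed.

Lemma fsbig_II_nat (R : Type) (idx : R) (op : Monoid.com_law idx) n (F : nat -> R) :
  \big[op/idx]_(i \in `I_n) F i = \big[op/idx]_(0 <= i < n) F i.
Proof. by rewrite -fsbig_ord big_mkord. Qed.

Lemma fsum1_setX_II (R : pzSemiRingType) (n : nat) :
  \sum_(p \in `I_n `*` `I_n) (1 : R) = (n ^ 2)%:R.
Proof.
rewrite -(pair_fsbig _ (fun _ _ => 1) (finite_II n) (finite_II n)).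
under eq_fsbigr do rewrite fsbig_II_nat sumr_const_nat subn0.
by rewrite fsbig_II_nat sumr_const_nat subn0 -mulrnA mulnn.
Qed.

Definition zi_box (s : nat) : set gint :=
  [set x | `|x.1| <= s%:Z /\ `|x.2| <= s%:Z].

Lemma zi_box_image s :
  zi_box s `<=` (fun p : nat * nat => (p.1%:Z - s%:Z, p.2%:Z - s%:Z))
                  @` (`I_(2 * s).+1 `*` `I_(2 * s).+1).
Proof.
move=> [a b] [+ +] => /= /ler_normlP[a_ge a_le] /ler_normlP[b_ge b_le].
exists (absz (a + s%:Z), absz (b + s%:Z)).
  by split => /=; rewrite -ltz_nat gez0_abs; lia.
by rewrite /= !gez0_abs; [congr pair; ring | lia | lia].
Qed.

Lemma finite_zi_box s : finite_set (zi_box s).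
Proof.
apply: sub_finite_set (@zi_box_image s) _.
by apply: finite_image; apply: finite_setX; apply: finite_II.
Qed.

Lemma finite_zi_norm_le B : finite_set [set x : gint | (zi_norm x <= B)%N].
Proof.
apply: sub_finite_set (@finite_zi_box B); case=> a b.
rewrite /zi_norm /= -lez_nat gez0_abs ?addr_ge0 ?sqr_ge0 // => le_B.
by split => /=; apply/ler_normlP; split; nia.
Qed.

Lemma count_zi_box_le (R : numDomainType) s (S : set gint) : S `<=` zi_box s ->
  \sum_(x \in S) (1 : R) <= ((2 * s).+1 ^ 2)%:R.
Proof.
move=> S_box; have finI := finite_setX (finite_II (2 * s).+1) (finite_II (2 * s).+1).
have S_image := subset_trans S_box (@zi_box_image s).
apply: le_trans (@ler_fsum_subset _ _ _ _ (fun=> 1) _ S_image _) _ => //.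
  exact: finite_image.
rewrite fsbig_image ?fsum1_setX_II // => -[i j] [i' j'] _ _ /= [].
by move=> /addIr/eqP + /addIr/eqP; rewrite !eqz_nat => /eqP-> /eqP->.
Qed.

Lemma nat_sqrt_exists (Y : nat) : exists s : nat, (s * s <= Y < s.+1 * s.+1)%N.
Proof.
elim: Y => [|Y [s /andP[le_sY lt_Ys]]]; first by exists 0%N.
have [lt_Y1s|le_sY1] := ltnP Y.+1 (s.+1 * s.+1).
  by exists s; rewrite lt_Y1s andbT; lia.
by exists s.+1; apply/andP; split; nia.
Qed.

Definition zi_nonzero_norm_le (X : nat) : set gint :=
  [set n | n <> zi_zero /\ (zi_norm n <= X)%N].

Lemma count_zi_nonzero_norm_le (R : numDomainType) (Y : nat) :
  \sum_(w \in zi_nonzero_norm_le Y) (1 : R) <= (9 * Y)%:R.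
Proof.
case: Y => [|Y].
  rewrite (_ : zi_nonzero_norm_le 0 = set0) ?fsbig_set0 //.
  by apply/seteqP; split => // w [w0]; rewrite leqn0 => /eqP/zi_norm_eq0.
have [s /andP[le_sY lt_Ys]] := nat_sqrt_exists Y.+1.
apply: le_trans (@count_zi_box_le R s _ _) _.
  move=> [a b] [_]; rewrite /zi_norm /= -lez_nat gez0_abs ?addr_ge0 ?sqr_ge0 //.
  move=> le_ab; have : a ^+ 2 + b ^+ 2 < (s.+1 * s.+1)%N%:Z.
    by apply: le_lt_trans le_ab _; rewrite ltz_nat.
  rewrite PoszM => lt_ab.
  by split => /=; apply/ler_normlP; split; nia.
by rewrite ler_nat; nia.
Qed.

Definition zi_multiples (d : gint) : set gint := [set n | zi_dvd d n].

Lemma count_zi_multiples_le (R : numFieldType) (A : set gint) (X : nat) (d : gint) :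
  A `<=` zi_nonzero_norm_le X -> d <> zi_zero ->
  \sum_(n \in A `&` zi_multiples d) (1 : R) <= 9 * X%:R / (zi_norm d)%:R.
Proof.
move=> A_bounded d0.
have Nd_gt0 : (0 < zi_norm d)%N by rewrite lt0n; apply/eqP => /zi_norm_eq0.
pose W := zi_nonzero_norm_le (X %/ zi_norm d).
have finW : finite_set W.
  by apply: sub_finite_set (@finite_zi_norm_le (X %/ zi_norm d)) => w [].
apply: le_trans (_ : \sum_(n \in zi_mul d @` W) (1 : R) <= _).
  apply: ler_fsum_subset => //; first exact: finite_image.
  move=> n [/A_bounded[n0 le_nX] [w def_n]]; exists w => //; split.
    by move=> w0; apply: n0; rewrite def_n w0 zi_mulr0.
  by rewrite leq_divRL // mulnC -zi_normM -def_n.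
rewrite fsbig_image; last by move=> w w' _ _; apply: zi_mulfI.
apply: le_trans (count_zi_nonzero_norm_le _ _) _.
rewrite natrM ler_pdivlMr ?ltr0n // -mulrA -!natrM ler_nat.
by rewrite leq_mul2l leq_divM orbT.
Qed.

Lemma exact_exp_leq_norm q n v : n <> zi_zero -> (1 < zi_norm q)%N ->
  exact_exp q n v -> (v <= zi_norm n)%N.
Proof.
move=> n0 q_gt1 [dvd_qv _]; have := zi_dvd_leq_norm n0 dvd_qv.
by rewrite zi_normX; apply: leq_trans; apply/ltnW/ltn_expl.
Qed.

Lemma exact_exp_le_count_dvd (R : numDomainType) q n X :
  n <> zi_zero -> (zi_norm n <= X)%N -> (1 < zi_norm q)%N ->
  ((\sum_(k \in [set k | exact_exp q n k]) (k : nat))%:R : R)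
    <= \sum_(0 <= j < X.+1) (if n \in zi_multiples (zi_exp q j.+1) then 1 else 0).
Proof.
move=> n0 le_nX q_gt1.
have indicator_ge0 j : 0 <= (if n \in zi_multiples (zi_exp q j) then 1 else 0 : R).
  by case: ifP.
(* The exact exponent always exists here, but the empty case costs nothing. *)
have [[v exact_v]|no_exp] := pselect (exists v, exact_exp q n v); last first.
  rewrite (_ : [set k | _] = set0) ?fsbig_set0 ?sumr_ge0 //.
  by apply/seteqP; split => // k /= exact_k; apply: no_exp; exists k.
rewrite (_ : [set k | _] = [set v]); last first.
  apply/seteqP; split => [k /= exact_k|k /= ->] //.
  exact: exact_exp_uniq exact_k exact_v.
have le_vX : (v <= X.+1)%N.
  exact/leqW/(leq_trans _ le_nX)/(exact_exp_leq_norm n0 q_gt1 exact_v).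
rewrite fsbig_set1 (big_cat_nat (leq0n v) le_vX) -[leLHS]addr0.
apply: lerD; last by apply: sumr_ge0 => j _; apply: indicator_ge0.
rewrite (@eq_big_nat _ _ _ 0 v _ (fun=> 1)) ?sumr_const_nat ?subn0 //.
move=> j /andP[_ lt_jv]; rewrite ifT //; apply: mem_set.
by apply: zi_dvd_trans (proj1 exact_v); apply: zi_dvd_exp2l.
Qed.

Lemma sum_grid_maxn (V : nmodType) (L : nat) (f : nat -> V) :
  \sum_(0 <= i < L) \sum_(0 <= j < L) f (maxn i j)
    = \sum_(0 <= m < L) f m *+ (2 * m).+1.
Proof.
elim: L => [|L IH]; first by rewrite !big_geq.
under eq_bigr do rewrite big_nat_recr //=.
rewrite !big_nat_recr //= big_split /= IH maxnn -!addrA; congr (_ + _).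
rewrite (@eq_big_nat _ _ _ 0 L _ (fun=> f L)); last first.
  by move=> i /andP[_ /ltnW/maxn_idPr->].
rewrite [X in _ + (X + _)](@eq_big_nat _ _ _ 0 L _ (fun=> f L)); last first.
  by move=> j /andP[_ /ltnW/maxn_idPl->].
by rewrite !sumr_const_nat subn0 addrA -mulrnDr -mulrSr addnn -mul2n.
Qed.

Definition tail_weight (R : realFieldType) (z : R) (n : nat) : R :=
  if z <= n%:R then (n%:R ^+ 2)^-1 else 0.

Section TailWeight.
Variables (R : realFieldType) (z : R).
Hypothesis z_gt0 : 0 < z.

Definition shell_weight (m : nat) : R :=
  if z <= (2 * (m * m))%:R then (m%:R ^+ 4)^-1 else 0.

(* Below the threshold, [2 / z] keeps the potential nonincreasing, because
   [z <= 2 (m + 1)^2] forces [(m + 1)^-2 <= 2 / z]. *)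
Definition tail_potential (m : nat) : R :=
  if z <= (2 * (m * m))%:R then (m%:R ^+ 2)^-1 else 2 / z.

Lemma tail_weight_le_shell i j : tail_weight z (i * i + j * j) <= shell_weight (maxn i j).
Proof.
rewrite /tail_weight /shell_weight.
have le_max2 : (maxn i j * maxn i j <= i * i + j * j <= 2 * (maxn i j * maxn i j))%N.
  by case: (leqP i j) => le_ij; apply/andP; split; nia.
have [le_z|_] := ifP; last by case: ifP => // _; rewrite invr_ge0 exprn_ge0.
have sum_gt0 : (0 < i * i + j * j)%N by rewrite -(ltr_nat R); apply: lt_le_trans le_z.
have max_gt0 : (0 < maxn i j)%N by nia.
rewrite ifT; last by apply: le_trans le_z _; rewrite ler_nat; case/andP: le_max2.
rewrite lef_pV2 ?posrE ?exprn_gt0 ?ltr0n // -!natrX ler_nat -[4%N]/(2 * 2)%N expnM.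
by rewrite leq_sqr -mulnn; case/andP: le_max2.
Qed.

Lemma tail_potential_ge0 m : 0 <= tail_potential m.
Proof.
rewrite /tail_potential; case: ifP => _; first by rewrite invr_ge0 exprn_ge0.
by rewrite divr_ge0 ?ltW.
Qed.

Lemma shell_weight_le_potentialB m :
  shell_weight m *+ (2 * m).+1 <= 4 * (tail_potential m - tail_potential m.+1).
Proof.
rewrite /shell_weight /tail_potential !natrM -!expr2 -!natrX.
have [le_z|_] := ifP; last first.
  rewrite mul0rn; case: ifP => [le_z1|_]; last by rewrite subrr mulr0.
  rewrite mulr_ge0 // subr_ge0 -invf_div lef_pV2 ?posrE ?divr_gt0 ?exprn_gt0 ?ltr0n //.
  by rewrite ler_pdivrMr // mulrC.
have m_gt0 : (0 < m)%N by case: m le_z => // /le_trans/(_ (lexx _)); rewrite mulr0 lt_geF.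
rewrite ifT; last first.
  by apply: le_trans le_z _; rewrite ler_pM2l // ler_nat leq_sqr.
rewrite -(mulr_natr ((m ^ 4)%:R^-1)) !natrX.
have x_ge1 : 1 <= m%:R :> R by rewrite ler1n.
set x : R := m%:R.
have -> : ((2 * m).+1)%:R = 2 * x + 1 :> R by rewrite /x -natr1 natrM.
have -> : (m.+1)%:R = x + 1 :> R by rewrite /x -natr1.
rewrite -subr_ge0.
have -> : 4 * ((x ^+ 2)^-1 - ((x + 1) ^+ 2)^-1) - (x ^+ 4)^-1 * (2 * x + 1)
    = (2 * x + 1) * ((x - 1) * (3 * x + 1)) / (x ^+ 4 * (x + 1) ^+ 2).
  by field; rewrite -/x; apply/andP; split; rewrite gt_eqF //; lra.
by rewrite divr_ge0 ?mulr_ge0 ?exprn_ge0 //; lra.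
Qed.

Lemma sum_grid_tail_weight_le L :
  \sum_(0 <= i < L) \sum_(0 <= j < L) tail_weight z (i * i + j * j) <= 8 / z.
Proof.
apply: le_trans (_ : \sum_(0 <= i < L) \sum_(0 <= j < L) shell_weight (maxn i j) <= _).
  by apply: ler_sum => i _; apply: ler_sum => j _; apply: tail_weight_le_shell.
rewrite sum_grid_maxn.
apply: le_trans (_ : \sum_(0 <= m < L) 4 * (tail_potential m - tail_potential m.+1) <= _).
  by apply: ler_sum => m _; apply: shell_weight_le_potentialB.
rewrite -mulr_sumr (telescope_sumr_eq (fun m => - tail_potential m)) //; last first.
  by move=> m _; rewrite opprK addrC.
have -> : tail_potential 0 = 2 / z by rewrite /tail_potential mul0n ifN // -ltNge.
have := tail_potential_ge0 L; have : 0 < 2 / z by rewrite divr_gt0.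
lra.
Qed.

Lemma sum_tail_weight_quadrant_le (Q : set gint) : finite_set Q ->
  (forall q, Q q -> 0 <= q.1 /\ 0 <= q.2) ->
  \sum_(q \in Q) tail_weight z (zi_norm q) <= 8 / z.
Proof.
move=> finQ Q_quadrant.
pose s := (\sum_(q \in Q) (zi_norm q : nat))%N.
have le_Qs q : Q q -> (zi_norm q <= s)%N by move=> Qq; rewrite /s (fsbigD1 q) ?leq_addr.
pose embed (p : nat * nat) : gint := (p.1%:Z, p.2%:Z).
have norm_embed p : zi_norm (embed p) = (p.1 * p.1 + p.2 * p.2)%N by [].
have finI := finite_setX (finite_II s.+1) (finite_II s.+1).
apply: le_trans (@ler_fsum_subset _ _ _ (embed @` (`I_s.+1 `*` `I_s.+1)) _ _ _ _) _.
- exact: finite_image.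
- move=> [a b] Qab; have [a_ge0 b_ge0] := Q_quadrant _ Qab.
  have := le_Qs _ Qab; rewrite /zi_norm /= -lez_nat gez0_abs ?addr_ge0 ?sqr_ge0 // => le_s.
  exists (absz a, absz b); last by rewrite /embed /= !gez0_abs.
  by split => /=; rewrite -ltz_nat gez0_abs //; nia.
- by move=> q _; rewrite /tail_weight; case: ifP => // _; rewrite invr_ge0 exprn_ge0.
rewrite fsbig_image; last by move=> [i j] [i' j'] _ _ [-> ->].
under eq_fsbigr do rewrite norm_embed.
rewrite -(pair_fsbig _ (fun i j => tail_weight z (i * i + j * j))
                     (finite_II _) (finite_II _)).
under eq_fsbigr do rewrite fsbig_II_nat.
by rewrite fsbig_II_nat sum_grid_tail_weight_le.
Qed.

End TailWeight.

Lemma geometric_sum_le (R : realFieldType) (r : R) (K : nat) : 0 <= r -> r <= 2^-1 ->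
  \sum_(0 <= j < K) r ^+ j.+2 <= 2 * r ^+ 2.
Proof.
move=> r_ge0 r_le_half.
suff : \sum_(0 <= j < K) r ^+ j.+2 <= 2 * r ^+ 2 - 2 * r ^+ K.+2.
  by move/le_trans; apply; rewrite gerBl mulr_ge0 ?exprn_ge0.
elim: K => [|K IH]; first by rewrite big_geq // subrr.
rewrite big_nat_recr //= [r ^+ K.+3]exprS.
have := exprn_ge0 K.+2 r_ge0; set t := r ^+ K.+2 in IH *; nra.
Qed.

Lemma sum_exact_exp_le (R : numDomainType) (A Q : set gint) (X : nat) :
  finite_set A -> finite_set Q ->
  A `<=` zi_nonzero_norm_le X ->
  (forall q, Q q -> (1 < zi_norm q)%N) ->
  \sum_(n \in A) \sum_(q \in Q) ((\sum_(k \in [set k | exact_exp q n k]) (k : nat))%:R : R)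
  <= \sum_(q \in Q) \sum_(n \in A `&` zi_multiples q) (1 : R)
     + \sum_(q \in Q) \sum_(0 <= j < X)
         \sum_(n \in A `&` zi_multiples (zi_exp q j.+2)) (1 : R).
Proof.
move=> finA finQ A_bounded Q_gt1.
rewrite [leRHS](_ : _ = \sum_(n \in A) \sum_(q \in Q) \sum_(0 <= j < X.+1)
    (if n \in zi_multiples (zi_exp q j.+1) then 1 else 0 : R)).
  apply: ler_fsum => // n /A_bounded[n0 le_nX]; apply: ler_fsum => // q /Q_gt1 q_gt1.
  exact: exact_exp_le_count_dvd.
rewrite [RHS]exchange_fsbig //.
under [RHS]eq_fsbigr do rewrite exchange_fsbig_nat // big_nat_recl //.
rewrite fsbig_split //; congr (_ + _); apply: eq_fsbigr => q _.
  by rewrite fsbig_mkcondr zi_exp1.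
by apply: eq_bigr => j _; rewrite fsbig_mkcondr.
Qed.

Lemma sum_count_prime_powers_le (R : realFieldType) (z : R) (A Q : set gint) (X : nat) :
  0 < z -> finite_set Q ->
  A `<=` zi_nonzero_norm_le X ->
  (forall q, Q q -> [/\ 0 <= q.1, 0 <= q.2, (2 <= zi_norm q)%N & z <= (zi_norm q)%:R]) ->
  \sum_(q \in Q) \sum_(0 <= j < X) \sum_(n \in A `&` zi_multiples (zi_exp q j.+2)) (1 : R)
    <= 144 * X%:R / z.
Proof.
(* 144 = 9 (multiples in a disc) * 2 (geometric series) * 8 (tail of N(q)^-2). *)
move=> z_gt0 finQ A_bounded Q_props.
apply: le_trans (ler_fsum (G := fun q => 18 * X%:R * tail_weight z (zi_norm q)) finQ _) _.
  move=> q /Q_props[_ _ q_ge2 le_zq].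
  have Nq_gt0 : (0 < zi_norm q)%N by apply: leq_trans q_ge2.
  pose r : R := (zi_norm q)%:R^-1.
  have r_ge0 : 0 <= r by rewrite invr_ge0 ler0n.
  have r_le_half : r <= 2^-1 by rewrite lef_pV2 ?posrE ?ltr0n // ler_nat.
  apply: le_trans (_ : \sum_(0 <= j < X) 9 * X%:R * r ^+ j.+2 <= _).
    apply: ler_sum => j _; apply: le_trans (count_zi_multiples_le _ A_bounded _) _.
      by move=> /(congr1 zi_norm); rewrite zi_normX => /eqP; rewrite expn_eq0 gtn_eqF.
    by rewrite zi_normX natrX /r exprVn.
  rewrite -mulr_sumr /tail_weight le_zq -exprVn -/r.
  apply: le_trans (ler_wpM2l _ (geometric_sum_le X r_ge0 r_le_half)) _.
    by rewrite mulr_ge0 ?ler0n.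
  by lra.
rewrite -mulr_fsumr.
apply: le_trans (ler_wpM2l _ (sum_tail_weight_quadrant_le z_gt0 finQ _)) _.
- by rewrite mulr_ge0 ?ler0n.
- by move=> q /Q_props[].
- by lra.
Qed.

Lemma calA_sub_nonzero_norm_le NN : calA NN `<=` zi_nonzero_norm_le (4 * zi_norm NN).
Proof.
move=> _ [p [[_ p_ndvd] lt_p_NN ->]]; split.
  move=> /zi_subr0_eq NNp; apply: p_ndvd; exists zi_one.
  by rewrite zi_mulr1 NNp.
by apply: leq_trans (zi_normB_le _ _) _; lia.
Qed.

Lemma finite_calA NN : finite_set (calA NN).
Proof.
apply: sub_finite_set (@finite_zi_norm_le (4 * zi_norm NN)) => n.
by move=> /calA_sub_nonzero_norm_le[].
Qed.

Lemma natr_Sift (R : realType) NN (z : R) q :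
  (Sift NN (calA_q NN q) z)%:R
  = \sum_(n \in [set n | calA NN n /\ Defs.coprimeP NN z n] `&` zi_multiples q) (1 : R).
Proof.
rewrite /Sift natr_fsum; last by apply: sub_finite_set (finite_calA NN) => n [[]].
by congr (\sum_(n \in _) _); apply/seteqP; split => n [[]].
Qed.

Lemma primes_between_props (R : realType) (z y : R) q : 2 <= z -> primes_between z y q ->
  [/\ 0 <= q.1, 0 <= q.2, (2 <= zi_norm q)%N & z <= (zi_norm q)%:R].
Proof.
move=> z_ge2 [[_ q1_gt0 q2_ge0] /andP[le_zq _]]; split => //; first exact: ltW.
by rewrite -(ler_nat R); apply: le_trans le_zq.
Qed.

Lemma finite_primes_between (R : realType) (z y : R) : 0 <= y ->
  finite_set (primes_between z y).
Proof.
move=> y_ge0; apply: sub_finite_set (@finite_zi_norm_le (Num.truncn y)) => q.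
by move=> [_ /andP[_ /ltW]]; rewrite -(truncn_ge_nat _ y_ge0).
Qed.

Theorem lemma3p2 :
  exists C : nat, forall (R : realType) (NN : gint) (y z : R),
    NN <> zi_zero -> 2 <= z -> z <= y ->
    ((T1 NN y z)%:R : R) <=
      (\sum_(q \in primes_between z y) Sift NN (calA_q NN q) z)%:R
      + C%:R * (zi_norm NN)%:R / z.
Proof.
exists 576%N => R NN y z _ z_ge2 le_zy.
have z_gt0 : 0 < z by apply: lt_le_trans z_ge2.
set A := [set n | calA NN n /\ Defs.coprimeP NN z n].
set Q := primes_between z y.
have A_bounded : A `<=` zi_nonzero_norm_le (4 * zi_norm NN).
  by move=> n [/calA_sub_nonzero_norm_le].
have finA : finite_set A by apply: sub_finite_set (finite_calA NN) => n [].
have finQ : finite_set Q by apply: finite_primes_between; lra.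
have Q_props q (Qq : Q q) := primes_between_props z_ge2 Qq.
rewrite /T1 -/A -/Q (@natr_fsum R) //; under eq_fsbigr do rewrite (@natr_fsum R) //.
apply: le_trans (@sum_exact_exp_le R _ _ _ finA finQ A_bounded _) _.
  by move=> q /Q_props[].
rewrite (@natr_fsum R) //; under [in leRHS]eq_fsbigr do rewrite natr_Sift.
rewrite lerD2l.
apply: le_trans (sum_count_prime_powers_le z_gt0 finQ A_bounded Q_props) _.
by rewrite natrM; lra.
Qed.
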